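(* Let $p_0,q\in\mathcal S^{d-1}$ with $p_0^\top q>0$, and consider the preference dynamics with the fixed recommendation $q_t=q$ for all $t\ge0$, i.e. $\tilde p_{t+1}=p_t+\eta_t\,(p_t^\top q)\,q$, $p_{t+1}=\tilde p_{t+1}/\|\tilde p_{t+1}\|_2$, with step sizes either constant ($\eta_t=\eta$) or decreasing ($\eta_t=\frac{\eta}{t+s}$). Let $R(T)=\sum_{t=0}^{T-1}(1-p_t^\top q)$. Then for every $T\ge 1$, \[R(T)\le C_\gamma\big((p_0^\top q)^{-2}-1\big),\qquad C_\gamma=\begin{cases}\frac{(\eta+1)^2}{\eta^2+2\eta}, & \eta_t=\eta,\\[2pt] \frac{s^2\pi^2}{6}, & \eta_t=\frac{\eta}{t+s}.\end{cases}\]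
   Context: $\mathcal S^{d-1}$ denotes the unit sphere in $\mathbb{R}^d$. In the constant step-size setting $\eta>0$ is a constant; in the decreasing step-size setting $\eta$ and $s$ are positive integers. $R(T)$ is the regret for the affinity reward $r_t=p_t^\top q_t$ relative to the maximal reward $1$. *)

From HB Require Import structures.
From mathcomp Require Import all_boot all_order all_algebra.
From mathcomp Require Import reals trigo.
Set Implicit Arguments. Unset Strict Implicit. Unset Printing Implicit Defensive.
Import Order.TTheory GRing.Theory Num.Theory.
Local Open Scope ring_scope.

Section Dyn.
Variables (R : realType) (d : nat).

Definition dotv (u v : 'rV[R]_d) : R := \sum_(i < d) u 0 i * v 0 i.

Definition norm2 (u : 'rV[R]_d) : R := Num.sqrt (dotv u u).

Definition on_sphere (u : 'rV[R]_d) : Prop := norm2 u = 1.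

Definition pref_step (eta_t : R) (q p : 'rV[R]_d) : 'rV[R]_d :=
  let pt := p + (eta_t * dotv p q) *: q in (norm2 pt)^-1 *: pt.

Fixpoint traj (eta : nat -> R) (q p0 : 'rV[R]_d) (t : nat) : 'rV[R]_d :=
  match t with
  | 0 => p0
  | t'.+1 => pref_step (eta t') q (traj eta q p0 t')
  end.

Definition regret (eta : nat -> R) (q p0 : 'rV[R]_d) (T : nat) : R :=
  \sum_(t < T) (1 - dotv (traj eta q p0 t) q).

End Dyn.

From HB Require Import structures.
From mathcomp Require Import all_boot all_order all_algebra.
From mathcomp Require Import reals trigo.
From mathcomp Require Import topology normedtype sequences.
From mathcomp Require Import ring lra zify.
Import Order.TTheory GRing.Theory Num.Theory.
Import numFieldNormedType.Exports.
Set Implicit Arguments. Unset Strict Implicit. Unset Printing Implicit Defensive.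
Local Open Scope ring_scope.

(* Write x_t = p_t^T q and y_t = x_t^-2 - 1, the squared tangent of the angle
   between p_t and q.  A step multiplies the component of p_t along q by
   1 + eta_t and leaves the orthogonal component unchanged; normalisation does
   not change their ratio, so y_(t+1) = y_t / (1 + eta_t)^2 exactly.  Each
   regret term obeys 1 - x_t <= y_t / 2, hence R(T) <= (sum_t y_t) / 2.  For a
   constant step this is a geometric series.  For eta_t = eta / (t + s) with
   eta >= 1 the contraction factors telescope to y_t <= y_0 s^2 / (t + s)^2, and
   sum_t 1 / (t + 1)^2 <= 2 <= pi^2 / 3 because pi^2 > 6, which follows from
   cos (5/4) >= 1 - (5/4)^2 / 2 > 0. *)

Section PiBound.
Variable R : realType.

Lemma cos_gt1_sub_sqr_half (x : R) : 0 < x <= 2 -> 1 - x ^+ 2 / 2 < cos x.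
Proof.
move=> /andP[x_gt0 x_le2].
have cvg_cos := @cvg_cos_coeff' R x; rewrite -(cvg_lim (@Rhausdorff R) cvg_cos).
have -> : 1 - x ^+ 2 / 2 = \sum_(0 <= i < 2) cos_coeff' x i.
  rewrite big_nat_recr//= big_nat1 /cos_coeff' /= expr0z expr1z double0 fact0 expr0.
  by rewrite (_ : (1.*2)`! = 2)%N //; lra.
apply: lt_sum_lim_series; [by move/cvgP in cvg_cos | move=> k].
rewrite /cos_coeff' -!exprnP -signr_odd -[in X in _ + X]signr_odd /= odd_double /=.
rewrite expr0 expr1 mul1r mulN1r mulNr.
(* Tail pairs x^n / n! - x^(n+2) / (n+2)! are positive as x^2 <= 4 < (n+2)(n+1). *)
set n := (2 + k.*2).*2.
have -> : (2 + k.*2.+1).*2 = n.+2 by rewrite addnS doubleS.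
have n_ge4 : (4 <= n)%N by rewrite /n -!muln2; lia.
clearbody n.
have x2_lt : x ^+ 2 < (n.+2 * n.+1)%:R.
  apply: (le_lt_trans (y := 4)); first by rewrite expr2; nra.
  by rewrite ltr_nat; nia.
rewrite factS factS !natrM exprSr exprSr -mulrA -expr2.
set a := x ^+ n; set f := n`!%:R.
have a_gt0 : 0 < a by rewrite exprn_gt0.
have f_gt0 : 0 < f by rewrite ltr0n fact_gt0.
have -> : a / f - a * x ^+ 2 / (n.+2%:R * (n.+1%:R * f))
          = a / f * (1 - x ^+ 2 / (n.+2 * n.+1)%:R).
  by rewrite natrM; field; rewrite !gt_eqF -?/f //; have := ler0n R n; lra.
apply: mulr_gt0; first exact: divr_gt0.
by rewrite subr_gt0 ltr_pdivrMr ?mul1r ?ltr0n.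
Qed.

Lemma pi_sqr_gt6 : 6 < pi ^+ 2 :> R.
Proof.
have pi2 := pi_ge2 R.
have cos_5_4 : 0 < cos (5 / 4 : R).
  have : 0 < (5 / 4 : R) <= 2 by apply/andP; split; lra.
  by move/cos_gt1_sub_sqr_half; rewrite expr2; lra.
have : 5 / 4 < pi / 2 :> R.
  rewrite -(ltr_cos (y := pi / 2)) ?cos_pihalf // in_itv /=; apply/andP; split; lra.
by rewrite expr2; nra.
Qed.
End PiBound.

Section DotProduct.
Variables (R : realType) (d : nat).
Implicit Types u v w : 'rV[R]_d.

Lemma dotvC u v : dotv u v = dotv v u.
Proof. by apply: eq_bigr => i _; rewrite mulrC. Qed.

Lemma dotvDl u v w : dotv (u + v) w = dotv u w + dotv v w.
Proof. by rewrite /dotv -big_split; apply: eq_bigr => i _; rewrite mxE mulrDl. Qed.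

Lemma dotvZl (a : R) u w : dotv (a *: u) w = a * dotv u w.
Proof. by rewrite /dotv mulr_sumr; apply: eq_bigr => i _; rewrite mxE mulrA. Qed.

Lemma dotvv_ge0 u : 0 <= dotv u u.
Proof. by apply: sumr_ge0 => i _; rewrite -expr2 sqr_ge0. Qed.

Lemma on_sphere_dotvv u : on_sphere u -> dotv u u = 1.
Proof. by move=> u1; rewrite -(sqr_sqrtr (dotvv_ge0 u)) -/(norm2 u) u1 expr1n. Qed.

Lemma dotv_le1 u v : dotv u u = 1 -> dotv v v = 1 -> dotv u v <= 1.
Proof.
move=> u1 v1; have := dotvv_ge0 (u - v).
rewrite -scaleN1r !dotvDl !dotvZl dotvC dotvDl dotvZl [dotv v (u + _)]dotvC.
by rewrite dotvDl dotvZl u1 v1 (dotvC v u); lra.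
Qed.

(* For unit vectors with u^T v = cos a > 0 this is tan^2 a. *)
Definition tan2 u v : R := (dotv u v) ^- 2 - 1.

Lemma tan2_ge0 u v :
  dotv u u = 1 -> dotv v v = 1 -> 0 < dotv u v -> 0 <= tan2 u v.
Proof.
move=> u1 v1 uv_gt0; rewrite subr_ge0 invf_ge1 ?exprn_gt0 //.
by rewrite exprn_ile1 ?dotv_le1 // ltW.
Qed.

Lemma one_sub_dotv_le_half_tan2 u v : 0 < dotv u v -> 1 - dotv u v <= tan2 u v / 2.
Proof.
rewrite /tan2; set x := dotv u v => x_gt0; rewrite -subr_ge0.
have -> : (x ^- 2 - 1) / 2 - (1 - x) = (1 - x) ^+ 2 * (1 + 2 * x) / (2 * x ^+ 2).
  by field; rewrite gt_eqF.
apply: divr_ge0; first by rewrite mulr_ge0 ?sqr_ge0 //; lra.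
by rewrite mulr_ge0 ?sqr_ge0.
Qed.

End DotProduct.

Section Step.
Variables (R : realType) (d : nat) (e : R) (p q : 'rV[R]_d).
Hypotheses (p_unit : dotv p p = 1) (q_unit : dotv q q = 1).
Hypotheses (pq_gt0 : 0 < dotv p q) (e_ge0 : 0 <= e).

Let e1_gt0 : 0 < 1 + e.
Proof. by rewrite (lt_le_trans ltr01) ?lerDl. Qed.

Let x := dotv p q.
Let pt := p + (e * x) *: q.
Let N := norm2 pt.

Let dotv_pt_q : dotv pt q = (1 + e) * x.
Proof. by rewrite dotvDl dotvZl q_unit -/x; ring. Qed.

Let dotv_pt_pt : dotv pt pt = 1 + (e ^+ 2 + 2 * e) * x ^+ 2.
Proof.
rewrite {1}/pt dotvDl dotvZl dotvC [dotv q pt]dotvC dotv_pt_q.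
by rewrite /pt dotvDl dotvZl p_unit (dotvC q p) -/x; ring.
Qed.

Let N_sqr : N ^+ 2 = dotv pt pt.
Proof. exact/sqr_sqrtr/dotvv_ge0. Qed.

Let N_gt0 : 0 < N.
Proof.
rewrite sqrtr_gt0 dotv_pt_pt; apply: (lt_le_trans ltr01); rewrite lerDl.
by rewrite mulr_ge0 ?sqr_ge0 // addr_ge0 ?sqr_ge0 // mulr_ge0.
Qed.

Let pref_stepE : pref_step e q p = N^-1 *: pt.
Proof. by []. Qed.

Lemma pref_step_unit : dotv (pref_step e q p) (pref_step e q p) = 1.
Proof.
rewrite pref_stepE dotvZl dotvC dotvZl -N_sqr.
by field; rewrite gt_eqF.
Qed.

Lemma pref_step_dotv_gt0 : 0 < dotv (pref_step e q p) q.
Proof.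
rewrite pref_stepE dotvZl dotv_pt_q.
by rewrite mulr_gt0 ?invr_gt0 // mulr_gt0.
Qed.

Lemma tan2_pref_step : tan2 (pref_step e q p) q = tan2 p q / (1 + e) ^+ 2.
Proof.
rewrite /tan2 pref_stepE dotvZl dotv_pt_q -/x !exprMn exprVn N_sqr dotv_pt_pt.
by field; rewrite -dotv_pt_pt -N_sqr !gt_eqF ?exprn_gt0.
Qed.

End Step.

Section Trajectory.
Variables (R : realType) (d : nat) (eta : nat -> R) (p0 q : 'rV[R]_d).
Hypotheses (p0_unit : dotv p0 p0 = 1) (q_unit : dotv q q = 1).
Hypotheses (p0q_gt0 : 0 < dotv p0 q) (eta_ge0 : forall t, 0 <= eta t).

Let p := traj eta q p0.

Lemma traj_unit_dotv_gt0 t : dotv (p t) (p t) = 1 /\ 0 < dotv (p t) q.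
Proof.
elim: t => [|t [pt_unit pq_gt0]] //=.
by rewrite pref_step_unit ?pref_step_dotv_gt0.
Qed.

Lemma tan2_traj_ge0 t : 0 <= tan2 (p t) q.
Proof. by have [pt_unit pq_gt0] := traj_unit_dotv_gt0 t; apply: tan2_ge0. Qed.

Lemma tan2_trajS t : tan2 (p t.+1) q = tan2 (p t) q / (1 + eta t) ^+ 2.
Proof. by have [pt_unit pq_gt0] := traj_unit_dotv_gt0 t; apply: tan2_pref_step. Qed.

Lemma regret_le_half_sum_tan2 T : regret eta q p0 T <= \sum_(t < T) tan2 (p t) q / 2.
Proof.
apply: ler_sum => t _; apply: one_sub_dotv_le_half_tan2.
by have [] := traj_unit_dotv_gt0 t.
Qed.

End Trajectory.

Lemma sum_inv_sqr_le (R : realFieldType) T :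
  \sum_(t < T) (t.+1%:R ^+ 2)^-1 <= 2 - 2 / T.+1%:R :> R.
Proof.
elim: T => [|T IH]; first by rewrite big_ord0 divr1; lra.
rewrite big_ord_recr /=; apply: le_trans (lerD IH (lexx _)) _.
have n_ge1 : 1 <= T.+1%:R :> R by rewrite ler1n.
rewrite -[T.+2%:R]natr1 -subr_ge0; set n : R := T.+1%:R.
have -> : 2 - 2 / (n + 1) - (2 - 2 / n + (n ^+ 2)^-1) = (n - 1) / (n ^+ 2 * (n + 1)).
  by field; rewrite !gt_eqF //; lra.
by rewrite divr_ge0 ?mulr_ge0 ?sqr_ge0 //; lra.
Qed.

Section Regret.
Variables (R : realType) (d : nat) (p0 q : 'rV[R]_d).
Hypotheses (p0_unit : dotv p0 p0 = 1) (q_unit : dotv q q = 1).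
Hypothesis p0q_gt0 : 0 < dotv p0 q.

Lemma regret_const_step_le (eta : R) T : 0 < eta ->
  regret (fun=> eta) q p0 T <= (eta + 1) ^+ 2 / (eta ^+ 2 + 2 * eta) * tan2 p0 q.
Proof.
move=> eta_gt0; set r := ((1 + eta) ^+ 2)^-1.
have r_ge0 : 0 <= r by rewrite invr_ge0 sqr_ge0.
have r_lt1 : r < 1 by rewrite invf_lt1 ?exprn_gt0 ?exprn_egt1 ?ltrDl // addr_gt0.
have -> : (eta + 1) ^+ 2 / (eta ^+ 2 + 2 * eta) = (1 - r)^-1.
  by rewrite /r; field; rewrite !gt_eqF //; nra.
have eta_ge0 : forall t : nat, 0 <= eta by move=> _; exact: ltW.
have tan2_traj t : tan2 (traj (fun=> eta) q p0 t) q = tan2 p0 q * r ^+ t.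
  elim: t => [|t IH]; first by rewrite mulr1.
  by rewrite tan2_trajS // IH [r ^+ t.+1]exprSr mulrA.
have y0_ge0 := tan2_ge0 p0_unit q_unit p0q_gt0.
apply: le_trans (regret_le_half_sum_tan2 p0_unit q_unit p0q_gt0 eta_ge0 T) _.
under eq_bigr do rewrite tan2_traj.
apply: (@le_trans _ _ (\sum_(t < T) tan2 p0 q * r ^+ t)).
  apply: ler_sum => t _; rewrite ler_pdivrMr // ler_peMr ?ler1n //.
  exact: mulr_ge0 (exprn_ge0 _ r_ge0).
have -> : \sum_(t < T) tan2 p0 q * r ^+ t = series (geometric (tan2 p0 q) r) T.
  by rewrite seriesEord.
by rewrite mulrC geometric_le_lim ?ger0_norm ?invr_gt0 ?exprn_gt0 ?addr_gt0.
Qed.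

Lemma tan2_traj_decr_step_le (eta : R) (s t : nat) : 1 <= eta -> (0 < s)%N ->
  tan2 (traj (fun t => eta / (t + s)%:R) q p0 t) q * (t + s)%:R ^+ 2
    <= s%:R ^+ 2 * tan2 p0 q.
Proof.
move=> eta_ge1 s_gt0.
have eta_ge0 t' : 0 <= eta / (t' + s)%:R :> R by rewrite divr_ge0 //; lra.
elim: t => [|t IH]; first by rewrite add0n mulrC.
rewrite tan2_trajS //.
set a : R := (t + s)%:R; have a_gt0 : 0 < a by rewrite ltr0n addn_gt0 s_gt0 orbT.
have -> : (t.+1 + s)%:R = a + 1 :> R by rewrite addSn -natr1.
set y := tan2 _ q in IH *.
have y_ge0 : 0 <= y by apply: tan2_traj_ge0.
have -> : y / (1 + eta / a) ^+ 2 * (a + 1) ^+ 2 = y * a ^+ 2 * ((a + 1) / (a + eta)) ^+ 2.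
  by field; rewrite !gt_eqF //; lra.
have ratio_ge0 : 0 <= (a + 1) / (a + eta) by rewrite divr_ge0 //; lra.
have ratio_le1 : (a + 1) / (a + eta) <= 1 by rewrite ler_pdivrMr ?mul1r; lra.
by apply: le_trans IH; rewrite ler_piMr ?mulr_ge0 ?sqr_ge0 // exprn_ile1.
Qed.

Lemma regret_decr_step_le (eta : R) (s T : nat) : 1 <= eta -> (0 < s)%N ->
  regret (fun t => eta / (t + s)%:R) q p0 T <= s%:R ^+ 2 * tan2 p0 q.
Proof.
move=> eta_ge1 s_gt0.
have eta_ge0 t : 0 <= eta / (t + s)%:R :> R by rewrite divr_ge0 //; lra.
set c := s%:R ^+ 2 * tan2 p0 q.
have c_ge0 : 0 <= c by rewrite mulr_ge0 ?sqr_ge0 ?tan2_ge0.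
apply: le_trans (regret_le_half_sum_tan2 p0_unit q_unit p0q_gt0 eta_ge0 T) _.
rewrite -mulr_suml ler_pdivrMr //.
apply: (@le_trans _ _ (c * \sum_(t < T) (t.+1%:R ^+ 2)^-1)).
  rewrite mulr_sumr; apply: ler_sum => t _.
  have ts_gt0 : 0 < (t + s)%:R :> R by rewrite ltr0n addn_gt0 s_gt0 orbT.
  apply: (@le_trans _ _ (c / (t + s)%:R ^+ 2)).
    by rewrite ler_pdivlMr ?exprn_gt0 // tan2_traj_decr_step_le.
  rewrite ler_wpM2l // lef_pV2 ?posrE ?exprn_gt0 ?ltr0n ?addn_gt0 ?s_gt0 ?orbT //.
  by rewrite lerXn2r ?nnegrE ?ler0n // ler_nat -addn1 leq_add2l.
rewrite ler_wpM2l //; apply: le_trans (sum_inv_sqr_le _ T) _.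
by rewrite gerBl divr_ge0.
Qed.

End Regret.

Theorem proposition2 (R : realType) (d : nat) (p0 q : 'rV[R]_d) :
  on_sphere p0 -> on_sphere q -> 0 < dotv p0 q ->
  (* constant step size eta_t = eta > 0 *)
  (forall eta : R, 0 < eta -> forall T : nat, (1 <= T)%N ->
     regret (fun _ => eta) q p0 T
       <= (eta + 1) ^+ 2 / (eta ^+ 2 + 2 * eta) * ((dotv p0 q) ^- 2 - 1))
  /\
  (* decreasing step size eta_t = eta / (t + s), eta s positive integers *)
  (forall eta s : nat, (0 < eta)%N -> (0 < s)%N -> forall T : nat, (1 <= T)%N ->
     regret (fun t => eta%:R / (t + s)%:R) q p0 T
       <= (s%:R ^+ 2 * pi ^+ 2 / 6) * ((dotv p0 q) ^- 2 - 1)).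
Proof.
move=> /on_sphere_dotvv p0_unit /on_sphere_dotvv q_unit p0q_gt0.
have y0_ge0 : 0 <= tan2 p0 q by exact: tan2_ge0.
split=> [eta eta_gt0 T _ | eta s eta_gt0 s_gt0 T _].
  exact: regret_const_step_le.
apply: le_trans (regret_decr_step_le _ _ _ _ _ _) _ => //; first by rewrite ler1n.
have -> : s%:R ^+ 2 * pi ^+ 2 / 6 * tan2 p0 q = s%:R ^+ 2 * (pi ^+ 2 / 6 * tan2 p0 q).
  by rewrite !mulrA.
rewrite ler_wpM2l ?sqr_ge0 // ler_peMl //.
by rewrite ler_pdivlMr // mul1r ltW // pi_sqr_gt6.
Qed.
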